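(* Let $G$ be a graph with at least one vertex and $f:V(G)\to\{1,2,3,\dots\}$. Then $2\gamma_{gr}(G)=\gamma_{gr}^{\times 2}(G_f)$.
   Context: Graphs are finite, simple, undirected; $N[v]$ is the closed neighborhood. $G_f$ is the graph with vertex set $\bigcup_{v\in V(G)}\{v^1,\dots,v^{f(v)+1}\}$ in which $v^iu^j$ is an edge iff either $v=u$ and $i\neq j$, or $vu\in E(G)$ (i.e., each $v$ is replaced by $f(v)+1$ pairwise true twins). A sequence $(v_1,\dots,v_k)$ of distinct vertices is legal if $N[v_i]\setminus\bigcup_{j<i}N[v_j]\neq\emptyset$ for every $i\ge2$, and a dominating sequence if moreover its vertex set is dominating; $\gamma_{gr}(G)$ is the maximum length of a dominating sequence. A sequence $(v_1,\dots,v_k)$ of distinct vertices is a double neighborhood sequence if for each $i$ some $u\in N[v_i]$ satisfies $|\{j<i:u\in N[v_j]\}|\le1$, and a double dominating sequence if moreover every vertex $w$ has $|N[w]\cap\{v_1,\dots,v_k\}|\ge 2$; for a graph without isolated vertices $\gamma_{gr}^{\times 2}$ is the maximum length of a double dominating sequence. *)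

(* Graphs: symmetric irreflexive boolean relations on a finType. *)
From mathcomp Require Import all_boot.
Set Implicit Arguments. Unset Strict Implicit. Unset Printing Implicit Defensive.

Section Defs.
Variables (T : finType) (e : rel T).

Definition cnbhd (v : T) : {set T} := [set u | (u == v) || e v u].

Definition legal_seq n (t : n.-tuple T) : bool :=
  uniq t &&
  [forall i : 'I_n,
     ~~ (cnbhd (tnth t i) \subset \bigcup_(j : 'I_n | j < i) cnbhd (tnth t j))].

Definition dominating_seq n (t : n.-tuple T) : bool :=
  legal_seq t && ([set: T] \subset \bigcup_(i : 'I_n) cnbhd (tnth t i)).

(* Grundy domination number: maximum length of a dominating sequence
   (distinct vertices, so length <= #|T|). *)
Definition gamma_gr : nat :=
  \max_(n < #|T|.+1 | [exists t : n.-tuple T, dominating_seq t]) n.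

Definition double_nbhd_seq n (t : n.-tuple T) : bool :=
  uniq t &&
  [forall i : 'I_n, [exists u in cnbhd (tnth t i),
     #|[set j : 'I_n | (j < i) && (u \in cnbhd (tnth t j))]| <= 1]].

Definition double_dominating_seq n (t : n.-tuple T) : bool :=
  double_nbhd_seq t &&
  [forall w : T, 2 <= #|cnbhd w :&: [set x | x \in t]|].

(* Grundy double domination number (meaningful for graphs without isolated
   vertices): maximum length of a double dominating sequence. *)
Definition gamma_gr2 : nat :=
  \max_(n < #|T|.+1 | [exists t : n.-tuple T, double_dominating_seq t]) n.

End Defs.

(* G_f: each vertex v replaced by f v + 1 pairwise adjacent true twins
   v^0, ..., v^(f v). *)
Definition blowup_vertex (T : finType) (f : T -> nat) := {v : T & 'I_(f v).+1}.

Definition blowup_rel (T : finType) (e : rel T) (f : T -> nat)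
  : rel (blowup_vertex f) :=
  fun a b => ((tag a == tag b) && (a != b)) || e (tag a) (tag b).
Arguments blowup_rel : clear implicits.

From mathcomp Require Import all_boot zify.
Set Implicit Arguments. Unset Strict Implicit. Unset Printing Implicit Defensive.

(* A dominating sequence (v_1, ..., v_k) of G gives the double dominating
   sequence (v_1^0, v_1^1, ..., v_k^0, v_k^1) of G_f: if u is a vertex that
   v_i newly dominates, then no term before the twins of v_i dominates u^0,
   so u^0 is dominated at most once before each of them.
   Conversely, project a double neighbourhood sequence of G_f to G: every term
   has a neighbour dominated at most once by the earlier terms. Put a term into
   A if it has a neighbour not dominated at all before it, and into B otherwise.
   A is legal, and so is B, because a neighbour of a B-term already dominated by
   an earlier B-term would have been dominated twice. Every legal sequence
   extends to a dominating one, so |A| and |B| are at most gamma_gr(G). *)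

Lemma count_take_tnth (X : Type) n (t : n.-tuple X) (P : pred X) i :
  count P (take i t) = #|[set j : 'I_n | (j < i) && P (tnth t j)]|.
Proof.
have mem_take_ord (j : 'I_n) : (j \in take i (enum 'I_n)) = (j < i).
  by rewrite in_take ?mem_enum // index_enum_ord.
rewrite cardsE cardE /enum_mem size_filter -enumT -(cat_take_drop i (enum 'I_n)) count_cat.
rewrite -[in LHS](map_tnth_enum t) -map_take count_map.
have /eq_in_count <- :
    {in take i (enum 'I_n), preim (tnth t) P =1 (fun j : 'I_n => (j < i) && P (tnth t j))}.
  by move=> j; rewrite mem_take_ord => ->.
have /eq_in_count -> :
    {in drop i (enum 'I_n), (fun j : 'I_n => (j < i) && P (tnth t j)) =1 xpred0}.
  move=> j jd; rewrite -mem_take_ord.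
  move: (enum_uniq 'I_n); rewrite -{1}(cat_take_drop i (enum _)) cat_uniq.
  by case/and3P=> _ /hasPn/(_ j jd)/negbTE ->.
by rewrite count_pred0 addn0.
Qed.

Lemma leq_bigmax_tuple (X : finType) (P : forall n, pred (n.-tuple X)) n (t : n.-tuple X) :
  uniq t -> P n t -> n <= \max_(m < #|X|.+1 | [exists t : m.-tuple X, P m t]) m.
Proof.
move=> ut Pt; have n_small : n < #|X|.+1.
  by rewrite ltnS -{1}(size_tuple t) -(card_uniqP ut) max_card.
by apply: (@leq_bigmax_cond _ _ _ (Ordinal n_small)); apply/existsP; exists t.
Qed.

Section Prefixwise.
Variables (X : Type) (Q : seq X -> X -> Prop).

Inductive prefixwise : seq X -> Prop :=
  | prefixwise_nil : prefixwise [::]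
  | prefixwise_rcons s x : prefixwise s -> Q s x -> prefixwise (rcons s x).

Lemma prefixwise_nthP x0 s :
  prefixwise s <-> forall i, i < size s -> Q (take i s) (nth x0 s i).
Proof.
have take_nth_rcons s' x i :
    i < size s' -> take i (rcons s' x) = take i s' /\ nth x0 (rcons s' x) i = nth x0 s' i.
  by move=> lt; rewrite -cats1 (takel_cat _ (ltnW lt)) nth_cat lt.
split.
- elim=> // {}s x _ IH Qsx i; rewrite size_rcons ltnS leq_eqVlt => /orP[/eqP-> | lt].
    by rewrite -cats1 take_size_cat // nth_cat ltnn subnn.
  by have [-> ->] := take_nth_rcons s x i lt; apply: IH.
- elim/last_ind: s => [|s x IH] H; first exact: prefixwise_nil.
  apply: prefixwise_rcons.
    apply: IH => i lt; have [<- <-] := take_nth_rcons s x i lt.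
    by apply: H; rewrite size_rcons ltnW.
  by have := H (size s); rewrite size_rcons ltnSn -cats1 take_size_cat // nth_cat ltnn subnn; apply.
Qed.

Lemma prefixwise_tnthP n (t : n.-tuple X) :
  prefixwise t <-> forall i : 'I_n, Q (take i t) (tnth t i).
Proof.
case: n t => [|n] t; first by rewrite tuple0; split=> [_ [] // | _]; exact: prefixwise_nil.
apply: (iff_trans (prefixwise_nthP (tnth t ord0) t)); rewrite size_tuple.
split=> H i; first by rewrite (tnth_nth (tnth t ord0)); apply: H.
by move=> lt; have := H (Ordinal lt); rewrite (tnth_nth (tnth t ord0)).
Qed.

End Prefixwise.

Section Legal.
Variables (T : finType) (e : rel T).
Notation N := (cnbhd e).

Definition dominators (u : T) : pred T := [pred w | u \in N w].

Definition legal : seq T -> Prop :=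
  prefixwise (fun s v => exists2 u, u \in N v & ~~ has (dominators u) s).

Definition double_legal : seq T -> Prop :=
  prefixwise (fun s v => exists2 u, u \in N v & count (dominators u) s <= 1).

Lemma legal_uniq s : legal s -> uniq s.
Proof.
elim=> //= {}s v _ IH [u uv /hasPn undom]; rewrite rcons_uniq IH andbT.
by apply: contraL uv => /undom.
Qed.

Lemma legal_size_le_card s : legal s -> size s <= #|T|.
Proof. by move/legal_uniq/card_uniqP <-; exact: max_card. Qed.

Lemma mem_bigcup_prefix n (t : n.-tuple T) i u :
  (u \in \bigcup_(j : 'I_n | j < i) N (tnth t j)) = has (dominators u) (take i t).
Proof.
rewrite has_count count_take_tnth card_gt0; apply/bigcupP/set0Pn => [[j ji uj] | [j]].
  by exists j; rewrite inE ji.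
by rewrite inE => /andP[ji uj]; exists j.
Qed.

Lemma legal_legal_seq n (t : n.-tuple T) : legal t -> legal_seq e t.
Proof.
move=> legal_t; rewrite /legal_seq (legal_uniq legal_t); apply/forallP => i.
have [u uti] := (prefixwise_tnthP _ t).1 legal_t i.
by rewrite -mem_bigcup_prefix => nu; apply/subsetPn; exists u.
Qed.

Lemma legal_rcons_undominated s w :
  legal s -> ~~ has (dominators w) s -> legal (rcons s w).
Proof. by move=> ls undom; apply: prefixwise_rcons ls _; exists w; rewrite // inE eqxx. Qed.

Lemma legal_dominating_le_gamma_gr s :
  legal s -> (forall w, has (dominators w) s) -> size s <= gamma_gr e.
Proof.
move=> ls dom; apply: (leq_bigmax_tuple (t := in_tuple s)) (legal_uniq ls) _.
rewrite /dominating_seq legal_legal_seq //=; apply/subsetP => w _.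
have /hasP[v vs wv] := dom w; have /tnthP[j vj] : v \in in_tuple s by [].
by apply/bigcupP; exists j; subst v.
Qed.

Lemma legal_le_gamma_gr s : legal s -> size s <= gamma_gr e.
Proof.
have [k] := ubnP (#|T| - size s); elim: k s => // k IH s slack ls.
have [/existsP[w undom] | /existsPn dom] := boolP [exists w, ~~ has (dominators w) s]; last first.
  by apply: legal_dominating_le_gamma_gr => // w; apply/negPn/dom.
have ls' := legal_rcons_undominated ls undom.
apply: leq_trans (IH _ _ ls'); rewrite size_rcons //.
by have := legal_size_le_card ls'; rewrite size_rcons; lia.
Qed.

Lemma double_legal_split s : double_legal s ->
  exists A B, [/\ legal A, legal B, size A + size B = size s, {subset A <= s} &
    forall u, has (dominators u) B -> 1 < count (dominators u) s].
Proof.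
elim=> [|{}s v _ [A [B [lA lB sizeAB sAs dupB]]] [u uv u_once]].
  by exists [::], [::]; split=> //; exact: prefixwise_nil.
have count_rcons u' : count (dominators u') (rcons s v) = count (dominators u') s + (u' \in N v).
  by rewrite -cats1 count_cat /= addn0.
have dupB' u' : has (dominators u') B -> 1 < count (dominators u') (rcons s v).
  by move/dupB; rewrite count_rcons => /leq_trans; apply; rewrite leq_addr.
have [/existsP[u' /andP[u'v /hasPn u'new]] | /existsPn no_private] :=
  boolP [exists u', (u' \in N v) && ~~ has (dominators u') s].
- exists (rcons A v), B; split=> //.
  + apply: prefixwise_rcons lA _; exists u' => //.
    by apply/hasPn => w /sAs; apply: u'new.
  + by rewrite !size_rcons addSn sizeAB.
  + by move=> w; rewrite !mem_rcons !inE => /orP[-> | /sAs ->]; rewrite ?orbT.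
- exists A, (rcons B v); split=> //.
  + apply: prefixwise_rcons lB _; exists u => //.
    by apply/negP => /dupB; rewrite ltnNge u_once.
  + by rewrite !size_rcons addnS sizeAB.
  + by move=> w /sAs; rewrite mem_rcons inE => ->; rewrite orbT.
  + move=> u0; rewrite -cats1 has_cat /= orbF => /orP[/dupB' // | u0v].
    have {}u0v : u0 \in N v by [].
    by move: (no_private u0); rewrite u0v /= negbK has_count count_rcons u0v addn1 ltnS.
Qed.

Lemma double_legal_le_gamma_gr s : double_legal s -> size s <= 2 * gamma_gr e.
Proof.
case/double_legal_split=> A [B [lA lB <- _ _]].
by rewrite mul2n -addnn leq_add ?legal_le_gamma_gr.
Qed.

End Legal.

Section Blowup.
Variables (T : finType) (e : rel T) (f : T -> nat).
Notation N := (cnbhd e).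
Notation Tf := (blowup_vertex f).
Notation ef := (blowup_rel T e f).

Lemma mem_cnbhd_blowup (a b : Tf) : (b \in cnbhd ef a) = (tag b \in N (tag a)).
Proof.
rewrite !inE /blowup_rel; case: (eqVneq b a) => [-> | nba]; first by rewrite !eqxx.
by rewrite andbT (eq_sym (tag a)).
Qed.

Lemma double_nbhd_seq_double_legal n (x : n.-tuple Tf) :
  double_nbhd_seq ef x -> double_legal e (map tag x).
Proof.
case/andP=> _ /forallP dx; apply/(prefixwise_tnthP _ (map_tuple tag x)) => i.
have /existsP[u /andP[ux u_once]] := dx i.
exists (tag u); first by rewrite tnth_map -mem_cnbhd_blowup.
rewrite count_take_tnth; apply/(leq_trans _ u_once)/eq_leq/eq_card => j.
by rewrite in_set [RHS]in_set tnth_map mem_cnbhd_blowup.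
Qed.

Lemma gamma_gr2_le_double_gamma_gr : gamma_gr2 ef <= 2 * gamma_gr e.
Proof.
apply/bigmax_leqP => m /existsP[x /andP[/double_nbhd_seq_double_legal/double_legal_le_gamma_gr]].
by rewrite size_map size_tuple.
Qed.

Hypotheses (e_sym : symmetric e) (f_pos : forall v, 0 < f v).

Definition copy (v : T) (k : nat) : Tf := Tagged (fun v => 'I_(f v).+1) (inord k : 'I_(f v).+1).

Lemma val_copy v k : k < 2 -> val (tagged (copy v k)) = k.
Proof. by move=> k_small; rewrite /= inordK // ltnS; have := f_pos v; lia. Qed.

Lemma half_ord_subproof n (i : 'I_(2 * n)) : i %/ 2 < n.
Proof. by rewrite ltn_divLR //; have := ltn_ord i; lia. Qed.

Definition half_ord n (i : 'I_(2 * n)) : 'I_n := Ordinal (half_ord_subproof i).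

Definition twins n (s : n.-tuple T) : (2 * n).-tuple Tf :=
  [tuple copy (tnth s (half_ord i)) (i %% 2) | i < 2 * n].

Lemma mem_copy_twins n (s : n.-tuple T) (j : 'I_n) k :
  k < 2 -> copy (tnth s j) k \in twins s.
Proof.
move=> k_small; have lt : 2 * j + k < 2 * n by have := ltn_ord j; lia.
apply/tnthP; exists (Ordinal lt); rewrite tnth_mktuple /=.
by congr copy; [congr tnth; apply: val_inj => /= | ]; lia.
Qed.

Lemma twins_uniq n (s : n.-tuple T) : uniq s -> uniq (twins s).
Proof.
move/tuple_uniqP => inj_s; apply/tuple_uniqP => i j; rewrite !tnth_mktuple => eq_copy.
have /(congr1 val) /= eq_half : half_ord i = half_ord j.
  by apply: inj_s; apply: (congr1 tag eq_copy).
have eq_mod : i %% 2 = j %% 2.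
  by have := congr1 (fun a : Tf => val (tagged a)) eq_copy; rewrite !val_copy ?ltn_pmod.
by apply: val_inj; rewrite /= (divn_eq i 2) (divn_eq j 2) eq_half eq_mod.
Qed.

Lemma twins_double_nbhd_seq n (s : n.-tuple T) : legal_seq e s -> double_nbhd_seq ef (twins s).
Proof.
case/andP=> us /forallP legal_s; rewrite /double_nbhd_seq twins_uniq //; apply/forallP => i.
have /subsetPn[u u_new u_old] := legal_s (half_ord i).
apply/existsP; exists (copy u 0); rewrite mem_cnbhd_blowup tnth_mktuple u_new /=.
apply/card_le1_eqP => j j'; rewrite [j \in _]in_set [j' \in _]in_set.
rewrite !mem_cnbhd_blowup !tnth_mktuple /=.
have first_twin (k : 'I_(2 * n)) : (k < i) && (u \in N (tnth s (half_ord k))) -> val k = i %/ 2 * 2.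
  case/andP=> ki uk; have : ~~ (half_ord k < half_ord i).
    by apply: contra u_old => lt; apply/bigcupP; exists (half_ord k).
  by rewrite /= -leqNgt; lia.
by move=> /first_twin jv /first_twin j'v; apply: val_inj; rewrite jv j'v.
Qed.

Lemma twins_double_dominating n (s : n.-tuple T) :
  dominating_seq e s -> double_dominating_seq ef (twins s).
Proof.
case/andP=> ls /subsetP dom_s; rewrite /double_dominating_seq twins_double_nbhd_seq //.
apply/forallP => w; have /bigcupP[j _ wj] := dom_s (tag w) (in_setT _).
have twins_in k : k < 2 -> copy (tnth s j) k \in cnbhd ef w :&: [set y | y \in twins s].
  move=> k_small; rewrite in_setI mem_cnbhd_blowup !inE mem_copy_twins // andbT.
  by move: wj; rewrite !inE eq_sym e_sym.
have copies_neq : copy (tnth s j) 0 != copy (tnth s j) 1.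
  by apply/negP => /eqP /(congr1 (fun a : Tf => val (tagged a))); rewrite !val_copy.
apply: leq_trans (subset_leq_card (_ : [set copy (tnth s j) 0; copy (tnth s j) 1] \subset _)).
  by rewrite cards2 copies_neq.
by apply/subsetP => y /set2P[] ->; apply: twins_in.
Qed.

Lemma double_gamma_gr_le_gamma_gr2 : 2 * gamma_gr e <= gamma_gr2 ef.
Proof.
rewrite mulnC -leq_divRL //; apply/bigmax_leqP => n /existsP[s dom_s].
rewrite leq_divRL // mulnC; apply: leq_bigmax_tuple (twins_double_dominating dom_s).
by apply: twins_uniq; case/andP: dom_s => /andP[].
Qed.

End Blowup.

Theorem proposition6 (T : finType) (e : rel T)
  (e_sym : symmetric e) (e_irr : irreflexive e) (T_ne : 0 < #|T|)
  (f : T -> nat) (f_pos : forall v, 0 < f v) :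
  2 * gamma_gr e = gamma_gr2 (blowup_rel T e f).
Proof.
by apply/eqP; rewrite eqn_leq (double_gamma_gr_le_gamma_gr2 e_sym f_pos) gamma_gr2_le_double_gamma_gr.
Qed.
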